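(* Let $\mathcal{P}$ be a probability distribution on $\mathbb{R}$ and let $X$ be a random variable with distribution $\mathcal{P}$. Define $g(p) := \inf\{r \in \mathbb{R} : \mathbb{P}(X \geq r) \leq p\}$ for $0<p<1$. Assume that $\mathbb{E}|X| < \infty$, that $g(p) \to \infty$ as $p \to 0^+$, and that $g$ is slowly varying at zero, i.e. $g(\lambda p)/g(p) \to 1$ as $p \to 0^+$ for every fixed $\lambda > 0$. For $n\in\mathbb{N}$ let $M_n = \max_{1\le i\le n} X_i$, where $X_1,\dots,X_n$ are i.i.d. with distribution $\mathcal{P}$. Then $$\mathbb{E} M_n \leq g(1/n)(1+o(1)) \quad \text{as } n\to\infty.$$ *)

From HB Require Import structures.
From mathcomp Require Import all_boot all_order all_algebra.
From mathcomp Require Import all_classical all_reals all_analysis.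
Import Order.TTheory GRing.Theory Num.Theory.
Import numFieldNormedType.Exports.
Local Open Scope classical_set_scope.
Local Open Scope ring_scope.

Definition upper_quantile {R : realType} (Q : probability R R) (p : R) : R :=
  inf [set r : R | (Q [set x : R | (r <= x)%R] <= p%:E)%E].

Definition mutually_independent {d} {T : measurableType d} {R : realType}
    (P : probability T R) (X : nat -> T -> R) : Prop :=
  forall (s : seq nat) (B : nat -> set R), uniq s ->
    (forall i, measurable (B i)) ->
    P (\bigcap_(i in [set i | i \in s]) (X i @^-1` B i)) =
    (\prod_(i <- s) P (X i @^-1` B i))%E.

Definition has_distribution {d} {T : measurableType d} {R : realType}
    (P : probability T R) (Y : T -> R) (Q : probability R R) : Prop :=
  forall B : set R, measurable B -> P (Y @^-1` B) = Q B.

(* M_n = max(X_0, ..., X_{n-1}) (meaningful for n >= 1) *)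
Definition maxn_rv {T} {R : realType} (X : nat -> T -> R) (n : nat) : T -> R :=
  fun t => \big[Num.max/X 0%N t]_(i < n) X i t.

From HB Require Import structures.
From mathcomp Require Import all_boot all_order all_algebra.
From mathcomp Require Import all_classical all_reals all_analysis.
From mathcomp Require Import ring lra measurable_realfun.
Import Order.TTheory GRing.Theory Num.Theory.
Import numFieldNormedType.Exports.
Local Open Scope classical_set_scope.
Local Open Scope ring_scope.

(* Fix eps > 0, put rho = 1 + eps and K = 2 rho, and write g for the upper
   quantile function. Slow variation gives g (p / K) < rho g p for small p;
   iterating, g (K^-(k+1) p) < rho^(k+1) g p, hence Q [rho^(k+1) g p, +oo) is
   at most K^-(k+1) p. For p = 1/n the union bound shows that M_n reaches the
   level b_k = rho^(k+1) g (1/n) with probability at most (2 rho)^-(k+1).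
   Integrating M_n <= b_0 + sum_k (b_(k+1) - b_k) 1[M_n >= b_k] then gives
   E M_n <= rho g (1/n) + sum_k eps g (1/n) 2^-(k+1) = (1 + 2 eps) g (1/n). *)

Section real_lemmas.
Context {R : realType}.

Lemma ler_bernoulli (h : R) (n : nat) : 0 <= h -> 1 + n%:R * h <= (1 + h) ^+ n.
Proof.
move=> h0; elim: n => [|n IH]; first by rewrite mul0r addr0 expr0.
have h1 : 0 <= 1 + h by lra.
rewrite exprS; apply: le_trans (ler_wpM2l h1 IH); rewrite -natr1.
have : 0 <= h * (n%:R * h) by rewrite !mulr_ge0.
nra.
Qed.

Lemma expr_unbounded (rho y : R) : 1 < rho -> exists N : nat, y < rho ^+ N.
Proof.
move=> rho1; have h0 : 0 < rho - 1 by rewrite subr_gt0.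
set N := (Num.truncn (y / (rho - 1))).+1; exists N.
have := @ler_bernoulli (rho - 1) N (ltW h0); rewrite [1 + (rho - 1)]addrC subrK.
have := truncnS_gt (y / (rho - 1)).
rewrite ltr_pdivrMr // -/N; lra.
Qed.

Lemma near_at_right0P (P : R -> Prop) :
  (\forall p \near 0^'+, P p) -> exists2 p0 : R, 0 < p0 & forall p, 0 < p < p0 -> P p.
Proof.
move=> /nbhs_ballP[e e0 He]; exists e => // p /andP[p0 pe]; apply: He => //.
by rewrite /ball /= sub0r normrN gtr0_norm.
Qed.

Lemma expV_mul_in_itv (K p p0 : R) (k : nat) : 1 <= K -> 0 < p < p0 ->
  0 < K^-1 ^+ k * p < p0.
Proof.
move=> K1 /andP[p_gt0 p_lt]; have K_gt0 : 0 < K by apply: lt_le_trans K1.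
rewrite mulr_gt0 ?exprn_gt0 ?invr_gt0 //=; apply: le_lt_trans p_lt.
apply: ler_piMl; first exact: ltW.
by rewrite exprn_ile1 ?invf_le1 // invr_ge0 ltW.
Qed.

Lemma iter_ratio_lt (g : R -> R) (K rho p0 : R) : 1 <= K -> 0 < rho ->
  (forall p, 0 < p < p0 -> g (K^-1 * p) < rho * g p) ->
  forall k p, 0 < p < p0 -> g (K^-1 ^+ k.+1 * p) < rho ^+ k.+1 * g p.
Proof.
move=> K1 rho_gt0 ratio; elim=> [|k IH] p p_itv; first by rewrite !expr1 ratio.
rewrite [K^-1 ^+ _]exprS -mulrA.
apply: lt_trans (ratio _ (expV_mul_in_itv _ _ _ k.+1 K1 p_itv)) _.
by rewrite [rho ^+ _]exprS -mulrA ltr_pM2l // IH.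
Qed.

End real_lemmas.

Section superlevel_sets.
Context {R : realType}.

Lemma measurable_ge (c : R) : measurable [set x : R | c <= x].
Proof. by rewrite -set_itvcy; exact: measurable_itv. Qed.

Lemma measurable_superlevel {d} {T : measurableType d} (f : T -> R) (c : R) :
  measurable_fun setT f -> measurable [set t | c <= f t].
Proof. by move=> mf; rewrite -[X in measurable X]setTI; exact: mf (measurable_ge c). Qed.

End superlevel_sets.

Section layer_cake.
Context {R : realType} {d : measure_display} {T : measurableType d}.
Variable P : probability T R.

Lemma le_layer_series (b : nat -> R) (x : R) (N : nat) :
  nondecreasing_seq b -> x < b N ->
  (x%:E <= (b 0%N)%:E + \sum_(0 <= k <oo) ((b k.+1 - b k) * (b k <= x)%R%:R)%:E)%E.
Proof.
move=> b_nd xN.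
have db_ge0 k : 0 <= b k.+1 - b k by rewrite subr_ge0 b_nd.
have partial : x <= b 0%N + \sum_(0 <= k < N) (b k.+1 - b k) * (b k <= x)%R%:R.
  elim: N xN => [/ltW|M IH xM]; first by rewrite big_geq // addr0.
  rewrite big_nat_recr //=; have [xbM|bMx] := ltP x (b M).
    by rewrite addrA; apply: le_trans (IH xbM) _; rewrite lerDl mulr_ge0.
  rewrite mulr1 (eq_big_nat _ _ (F2 := fun k => b k.+1 - b k)); last first.
    by move=> k /andP[_ kM]; rewrite (le_trans (b_nd _ _ (ltnW kM)) bMx) mulr1.
  rewrite telescope_sumr //; lra.
apply: (@le_trans _ _ ((b 0%N)%:E +
    \sum_(0 <= k < N) ((b k.+1 - b k) * (b k <= x)%R%:R)%:E)%E).
  by rewrite sumEFin -EFinD lee_fin.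
rewrite leeD2l //; apply: nneseries_lim_ge => k _ _.
by rewrite lee_fin mulr_ge0.
Qed.

Local Open Scope ereal_scope.

Lemma integral_le_layer_series (f : T -> R) (b : nat -> R) :
  measurable_fun setT f -> nondecreasing_seq b -> (0 <= b 0%N)%R ->
  (forall x, exists N, (x < b N)%R) ->
  \int[P]_t (f t)%:E <=
    (b 0%N)%:E + \sum_(0 <= k <oo) (b k.+1 - b k)%:E * P [set t | (b k <= f t)%R].
Proof.
move=> mf b_nd b0_ge0 b_unbounded.
have db_ge0 k : (0 <= b k.+1 - b k)%R by rewrite subr_ge0 b_nd.
pose A k := [set t | (b k <= f t)%R].
have mA k : measurable (A k) by exact: measurable_superlevel.
pose h k t : \bar R := (b k.+1 - b k)%:E * (\1_(A k) t)%:E.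
have h_ge0 k t : 0 <= h k t by rewrite mule_ge0 ?lee_fin.
have mh k : measurable_fun [set: T] (h k).
  by apply: measurable_funeM; apply/measurable_EFinP; exact/measurable_indic.
have f_le t : (f t)%:E <= (b 0%N)%:E + \sum_(0 <= k <oo) h k t.
  have [N ltN] := b_unbounded (f t).
  apply: le_trans (le_layer_series _ _ _ b_nd ltN) _; rewrite leeD2l //.
  apply: lee_nneseries => [k _ _|k _]; first by rewrite lee_fin mulr_ge0.
  by rewrite /h indicE mem_setE EFinM.
have int_h k : \int[P]_t h k t = (b k.+1 - b k)%:E * P (A k).
  rewrite ge0_integralZl_EFin //; last by apply/measurable_EFinP; exact/measurable_indic.
  by rewrite integral_indic // setIT.
pose F : T -> \bar R := EFin \o f.
have mF : measurable_fun setT F by exact/measurable_EFinP.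
have mH : measurable_fun setT (fun t => \sum_(0 <= k <oo) h k t).
  exact: ge0_emeasurable_sum.
have H_ge0 t : 0 <= \sum_(0 <= k <oo) h k t by exact: nneseries_ge0.
apply: (@le_trans _ _ (\int[P]_t F^\+ t)).
  have Fneg_ge0 : 0 <= \int[P]_t F^\- t.
    by apply: integral_ge0 => t _; exact: funeneg_ge0.
  by rewrite integralE; apply: le_trans (leeB (lexx _) Fneg_ge0) _; rewrite sube0.
apply: (@le_trans _ _ (\int[P]_t ((b 0%N)%:E + \sum_(0 <= k <oo) h k t))).
  apply: ge0_le_integral => //.
  - exact: measurable_funepos.
  - by apply: emeasurable_funD => //; exact: measurable_cst.
  - by move=> t _; rewrite funeposE ge_max f_le adde_ge0.
rewrite ge0_integralD // integral_cst // [X in _ * X]probability_setT mule1.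
rewrite integral_nneseries //.
by under eq_eseriesr do rewrite int_h.
Qed.

Lemma integral_le_geometric_tail (f : T -> R) (g eps : R) :
  measurable_fun setT f -> (0 < g)%R -> (0 < eps)%R ->
  (forall k, P [set t | ((1 + eps) * g * (1 + eps) ^+ k <= f t)%R] <=
             ((2 * (1 + eps))^-1 ^+ k.+1)%:E) ->
  \int[P]_t (f t)%:E <= ((1 + 2 * eps) * g)%:E.
Proof.
move=> mf g_gt0 eps_gt0 tail; set rho := (1 + eps)%R.
have rho_gt1 : (1 < rho)%R by rewrite /rho; lra.
have b0_gt0 : (0 < rho * g)%R by rewrite mulr_gt0 // (lt_trans ltr01).
pose b k := (rho * g * rho ^+ k)%R.
have b_nd : nondecreasing_seq b.
  by move=> m n mn; rewrite ler_pM2l // ler_eXn2l // ltW.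
have b_unbounded x : exists N, (x < b N)%R.
  have [N xN] := expr_unbounded _ (x / (rho * g)) rho_gt1.
  by exists N; rewrite /b mulrC -ltr_pdivrMr.
have layer_le k : (b k.+1 - b k)%:E * P [set t | (b k <= f t)%R] <=
                  (eps * g / (2 ^ (k + 1))%:R)%:E.
  apply: le_trans (lee_wpmul2l _ (tail k)) _.
    by rewrite lee_fin subr_ge0 b_nd.
  have rho_neq0 : rho != 0%R by rewrite gt_eqF // (lt_trans ltr01).
  rewrite -EFinM lee_fin /b /rho natrX addn1 exprVn exprMn [((1 + eps) ^+ k.+1)%R]exprS.
  rewrite le_eqVlt; apply/orP; left; apply/eqP; field.
  by rewrite !expf_neq0 // pnatr_eq0.
have geometric_sum : \sum_(0 <= k <oo) (eps * g / (2 ^ (k + 1))%:R)%:E = (eps * g)%:E.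
  by have := @cvg_geometric_eseries_half R (eps * g)%R 0; rewrite expr0 divr1 => /cvg_lim <-.
have b0_ge0 : (0 <= b 0%N)%R by rewrite /b expr0 mulr1 ltW.
apply: le_trans (integral_le_layer_series f b mf b_nd b0_ge0 b_unbounded) _.
apply: le_trans (_ : (b 0%N)%:E + (eps * g)%:E <= _); last first.
  by rewrite -EFinD lee_fin /b expr0 mulr1 /rho; lra.
rewrite -geometric_sum leeD2l //; apply: lee_nneseries => // k _ _.
by rewrite mule_ge0 ?measure_ge0 // lee_fin subr_ge0 b_nd.
Qed.

End layer_cake.

Lemma maxn_rv_ge {R : realType} {T : Type} (X : nat -> T -> R) (n : nat) (t : T) (c : R) :
  (0 < n)%N -> c <= maxn_rv X n t -> exists i : 'I_n, c <= X i t.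
Proof.
(* [maxn_rv] folds [Num.max] starting from [X 0], which is one of the [X i] only when [n > 0]. *)
move=> n_gt0; suff : c <= maxn_rv X n t -> c <= X 0%N t \/ exists i : 'I_n, c <= X i t.
  by move=> + /[dup] => /[apply] -[c_le|//]; exists (Ordinal n_gt0).
rewrite /maxn_rv; elim/big_ind: _ => [|x y IHx IHy|i _ c_le]; [by left| |by right; exists i].
by rewrite le_max => /orP[/IHx|/IHy].
Qed.

Section maximum_of_identically_distributed.
Context {R : realType} {d : measure_display} {T : measurableType d}.
Variables (P : probability T R) (Q : probability R R) (X : nat -> T -> R).
Hypothesis mX : forall i, measurable_fun setT (X i).
Hypothesis X_Q : forall i, has_distribution P (X i) Q.

Lemma measurable_maxn_rv (n : nat) : measurable_fun setT (maxn_rv X n).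
Proof.
rewrite /maxn_rv; elim: (index_enum _) => [|i s IH].
  by under eq_fun do rewrite big_nil; exact: mX.
under eq_fun do rewrite big_cons; exact: measurable_maxr.
Qed.

Lemma maxn_rv_tail_le (n : nat) (c : R) : (0 < n)%N ->
  (P [set t | c <= maxn_rv X n t]%R <= n%:R%:E * Q [set x | c <= x]%R)%E.
Proof.
move=> n_gt0.
have mF i : measurable (X i @^-1` [set x | c <= x]) by exact: measurable_superlevel.
have mA : measurable [set t | c <= maxn_rv X n t].
  exact/measurable_superlevel/measurable_maxn_rv.
have cover : [set t | c <= maxn_rv X n t] `<=`
             \big[setU/set0]_(i < n) X i @^-1` [set x | c <= x].
  move=> t /(maxn_rv_ge _ _ _ _ n_gt0)[i c_le].
  by rewrite -(bigcup_mkord n (fun i => X i @^-1` _)); exists i => /=.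
apply: le_trans (content_subadditive P (fun i _ => mF i) mA cover) _.
apply: (@le_trans _ _ (\sum_(i < n) Q [set x | c <= x]%R)%E).
  apply: lee_sum => i _.
  by rewrite -(X_Q i) //; exact: measurable_ge.
by rewrite sumr_const card_ord mule_natl.
Qed.

End maximum_of_identically_distributed.

Section upper_quantile.
Context {R : realType} (Q : probability R R).
Local Notation g := (upper_quantile Q).

Lemma upper_quantile_tail (p r : R) :
  0 < g p -> g p < r -> (Q [set x | r <= x]%R <= p%:E)%E.
Proof.
rewrite /upper_quantile => g_gt0 g_lt.
have [|y Sy y_lt] := inf_lt _ g_lt.
  by apply/set0P/negP => /eqP S0; move: g_gt0; rewrite S0 inf0 ltxx.
apply: le_trans Sy; apply: le_measure; rewrite ?inE; try exact: measurable_ge.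
by move=> x /= r_le; apply: le_trans r_le; exact: ltW.
Qed.

Lemma upper_quantile_geometric_tail (K rho : R) : 1 <= K -> 1 < rho ->
  g p @[p --> 0^'+] --> +oo ->
  g (K^-1 * p) / g p @[p --> 0^'+] --> (1 : R) ->
  exists2 p0 : R, 0 < p0 & forall p, 0 < p < p0 ->
    0 < g p /\ forall k, (Q [set x | rho * g p * rho ^+ k <= x]%R <= (K^-1 ^+ k.+1 * p)%:E)%E.
Proof.
move=> K1 rho_gt1 g_oo g_sv.
have g_gt0 : \forall p \near 0^'+, 0 < g p.
  by move/cvgryPgtr : g_oo; apply; exact: num_real.
have [p0 p0_gt0 near_p0] := near_at_right0P _ (filterI g_gt0 (cvgr_lt _ g_sv _ rho_gt1)).
have g_pos p : 0 < p < p0 -> 0 < g p by case/near_p0.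
have ratio p : 0 < p < p0 -> g (K^-1 * p) < rho * g p.
  by case/near_p0 => gp_gt0; rewrite -ltr_pdivrMr.
exists p0 => // p p_itv; split=> [|k]; first exact: g_pos.
apply: upper_quantile_tail; first exact/g_pos/(expV_mul_in_itv _ _ _ k.+1 K1 p_itv).
rewrite mulrAC -exprS; apply: (iter_ratio_lt _ _ _ _ K1 _ ratio k _ p_itv).
exact: lt_trans ltr01 rho_gt1.
Qed.

End upper_quantile.

Lemma eventually_le_mul_1_plus_o {R : realType} (a : nat -> \bar R) (b : nat -> R) :
  (forall eps : R, 0 < eps ->
     \forall n \near \oo, 0 < b n /\ (a n <= ((1 + eps) * b n)%:E)%E) ->
  exists e : nat -> R, e @ \oo --> 0 /\
    \forall n \near \oo, (a n <= (b n * (1 + e n))%:E)%E.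
Proof.
move=> le_eps; exists (fun n => Num.max 0 (fine (a n) / b n - 1)); split.
  apply/cvgrPdist_le => eps eps_gt0.
  apply: filterS (le_eps eps eps_gt0) => n [bn_gt0 an_le].
  rewrite sub0r normrN ger0_norm ?le_max ?lexx // ge_max (ltW eps_gt0) /=.
  move: an_le; case: (a n) => [r| |] //=; last by rewrite mul0r sub0r; lra.
  by rewrite lee_fin lerBlDr ler_pdivrMr // addrC.
apply: filterS (le_eps 1 ltr01) => n [bn_gt0 an_le].
move: an_le; case: (a n) => [r _| |_] //=; last exact: leNye.
rewrite lee_fin; apply: le_trans (_ : _ <= b n * (1 + (r / b n - 1))) _.
  by rewrite addrC subrK mulrC divfK ?gt_eqF.
by rewrite ler_pM2l // lerD2l le_max lexx orbT.
Qed.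

Section maximum_of_iid_sample.
Context {R : realType} (Q : probability R R).
Context {d : measure_display} {T : measurableType d} (P : probability T R).
Variable X : nat -> T -> R.
Hypothesis mX : forall i, measurable_fun setT (X i).
Hypothesis X_Q : forall i, has_distribution P (X i) Q.
Local Notation g := (upper_quantile Q).
Hypothesis g_oo : g p @[p --> 0^'+] --> +oo.
Hypothesis g_sv : forall lam : R, 0 < lam -> g (lam * p) / g p @[p --> 0^'+] --> (1 : R).

Lemma expectation_maxn_rv_le (eps : R) : 0 < eps ->
  \forall n \near \oo, 0 < g n%:R^-1 /\
    (\int[P]_t (maxn_rv X n t)%:E <= ((1 + eps) * g n%:R^-1)%:E)%E.
Proof.
move=> eps_gt0; set e := eps / 2; set rho := 1 + e; set K := 2 * rho.
have e_gt0 : 0 < e by rewrite divr_gt0.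
have rho_gt1 : 1 < rho by rewrite /rho; lra.
have K1 : 1 <= K by rewrite /K; lra.
have Kinv_gt0 : 0 < K^-1 by rewrite invr_gt0; lra.
have [p0 p0_gt0 tail] := upper_quantile_geometric_tail Q _ _ K1 rho_gt1 g_oo (g_sv _ Kinv_gt0).
near=> n.
have n_gt0 : (0 < n)%N by near: n; exact: nbhs_infty_gt.
have n_itv : 0 < (n%:R : R)^-1 < p0.
  rewrite invr_gt0 ltr0n n_gt0 /= -(invrK p0) ltf_pV2 ?posrE ?invr_gt0 ?ltr0n //.
  by near: n; exact: nbhs_infty_gtr.
have [gn_gt0 tail_n] := tail _ n_itv; split => //.
have -> : 1 + eps = 1 + 2 * e by rewrite /e; lra.
apply: integral_le_geometric_tail => //; first exact: measurable_maxn_rv.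
move=> k; apply: le_trans (maxn_rv_tail_le _ _ _ mX X_Q _ _ n_gt0) _.
apply: le_trans (lee_wpmul2l _ (tail_n k)) _; first by rewrite lee_fin.
by rewrite -EFinM mulrCA mulfV ?mulr1 // pnatr_eq0 -lt0n.
Unshelve. all: by end_near.
Qed.

End maximum_of_iid_sample.

Theorem proposition3 (R : realType) (Q : probability R R)
  (d : measure_display) (T : measurableType d) (P : probability T R)
  (X : nat -> T -> R) :
  (forall i, measurable_fun setT (X i)) ->
  (forall i, has_distribution P (X i) Q) ->
  mutually_independent P X ->
  (\int[Q]_x (`|x|)%:E < +oo)%E ->
  upper_quantile Q p @[p --> 0^'+] --> +oo ->
  (forall lam : R, 0 < lam ->
     upper_quantile Q (lam * p) / upper_quantile Q p @[p --> 0^'+] --> (1 : R)) ->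
  exists e : nat -> R, e @ \oo --> 0 /\
    \forall n \near \oo,
      (\int[P]_t (maxn_rv X n t)%:E <=
         (upper_quantile Q n%:R^-1 * (1 + e n))%:E)%E.
Proof.
move=> mX X_Q _ _ g_oo g_sv; apply: eventually_le_mul_1_plus_o => eps eps_gt0.
exact: expectation_maxn_rv_le.
Qed.
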